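(* If $X$ satisfies $selSS^*_{cd}(\mathcal{O},\Gamma)$, has countable extent, and $|X|<\mathfrak{b}$, then $X$ is selectively strongly star-Hurewicz.
   Context: All spaces are regular. $St(A,\mathcal{U})=\bigcup\{U\in\mathcal{U}:U\cap A\neq\emptyset\}$. $\mathfrak{b}$ is the bounding number. $X$ has countable extent if every closed discrete subset of $X$ is countable. $selSS^*_{cd}(\mathcal{O},\Gamma)$: for every sequence $(\mathcal{U}_n:n\in\omega)$ of open covers and every sequence $(D_n:n\in\omega)$ of dense subsets of $X$ there are sets $C_n\subseteq D_n$, closed and discrete in $X$, such that every $x\in X$ lies in $St(C_n,\mathcal{U}_n)$ for all but finitely many $n$. $X$ is selectively strongly star-Hurewicz if for every sequence $(\mathcal{U}_n)$ of open covers and every sequence $(D_n)$ of dense subsets there are finite $F_n\subseteq D_n$ such that every $x\in X$ lies in $St(F_n,\mathcal{U}_n)$ for all but finitely many $n$. *)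

From HB Require Import structures.
From mathcomp Require Import all_boot all_order.
From mathcomp Require Import all_classical all_reals all_analysis.
Set Implicit Arguments. Unset Strict Implicit. Unset Printing Implicit Defensive.
Local Open Scope classical_set_scope.

Definition star {X : Type} (A : set X) (U : set (set X)) : set X :=
  \bigcup_(V in [set V | U V /\ V `&` A !=set0]) V.

Definition open_cover {X : topologicalType} (U : set (set X)) : Prop :=
  (forall V, U V -> open V) /\ \bigcup_(V in U) V = setT.

Definition closed_discrete {X : topologicalType} (C : set X) : Prop :=
  closed C /\ forall x, C x -> exists W : set X, open W /\ W x /\ W `&` C = [set x].

Definition countable_extent (X : topologicalType) : Prop :=
  forall C : set X, closed_discrete C -> countable C.

Definition le_star (f g : nat -> nat) : Prop :=
  exists N, forall n, (N <= n)%N -> (f n <= g n)%N.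

Definition unbounded_family (A : set (nat -> nat)) : Prop :=
  ~ exists g, forall f, A f -> le_star f g.

(* |X| < b, where b = min { |A| : A unbounded in omega^omega under eventual domination }:
   no unbounded family has cardinality <= |X|. *)
Definition card_lt_bounding (X : Type) : Prop :=
  ~ exists A : set (nat -> nat), unbounded_family A /\ (A #<= @setT X)%card.

Definition selSS_cd_O_Gamma (X : topologicalType) : Prop :=
  forall (U : nat -> set (set X)) (D : nat -> set X),
    (forall n, open_cover (U n)) -> (forall n, dense (D n)) ->
    exists C : nat -> set X,
      (forall n, C n `<=` D n /\ closed_discrete (C n)) /\
      forall x : X, exists N, forall n, (N <= n)%N -> star (C n) (U n) x.

Definition sel_strongly_star_Hurewicz (X : topologicalType) : Prop :=
  forall (U : nat -> set (set X)) (D : nat -> set X),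
    (forall n, open_cover (U n)) -> (forall n, dense (D n)) ->
    exists F : nat -> set X,
      (forall n, F n `<=` D n /\ finite_set (F n)) /\
      forall x : X, exists N, forall n, (N <= n)%N -> star (F n) (U n) x.

From mathcomp Require Import all_boot all_order.
From mathcomp Require Import all_classical all_reals all_analysis.
Local Open Scope classical_set_scope.

(* Apply selSS*_cd(O,Gamma) to obtain closed discrete sets
   C n <= D n whose stars St(C n, U n) eventually cover every point.  By
   countable extent each C n is countable, so it carries an injective
   "index" h n : X -> nat.  For a point x and each n, let f_x n be the index
   of some c in C n sharing a member of U n with x.  The family {f_x : x in X}
   has size at most |X| < b, hence is dominated mod finite by a single g.
   Then F n = { c in C n : h n c <= g n } is finite, and for every x and all
   large n the witness of index f_x n <= g n lies in F n, so x is in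
   St(F n, U n). *)

Section Stars.
Context {T : Type}.

Lemma starP (A : set T) (U : set (set T)) (x : T) :
  star A U x <-> exists2 c, A c & exists V, [/\ U V, V x & V c].
Proof.
split.
  by move=> [V [UV [c [Vc Ac]]] Vx]; exists c => //; exists V.
by move=> [c Ac [V [UV Vx Vc]]]; exists V => //; split => //; exists c.
Qed.

Lemma star_sub (A B : set T) (U : set (set T)) :
  A `<=` B -> star A U `<=` star B U.
Proof.
by move=> AB x /starP [c /AB Bc wit]; apply/starP; exists c.
Qed.

Lemma star_index_choice (A : nat -> set T) (U : nat -> set (set T))
    (h : nat -> T -> nat) (x : T) :
  exists f : nat -> nat, forall n,
    star (A n) (U n) x -> star [set c | A n c /\ h n c = f n] (U n) x.
Proof.
suff /choice [f Hf] : forall n, exists k,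
    star (A n) (U n) x -> star [set c | A n c /\ h n c = k] (U n) x.
  by exists f.
move=> n; have [/starP [c Ac wit]|nostar] := pselect (star (A n) (U n) x).
  by exists (h n c) => _; apply/starP; exists c.
by exists 0%N.
Qed.

End Stars.

Lemma finite_sublevel (T : Type) (C : set T) (h : T -> nat) (k : nat) :
  {in C &, injective h} -> finite_set [set c | C c /\ (h c <= k)%N].
Proof.
move=> h_inj; set F := [set c | C c /\ (h c <= k)%N].
have hF : (h @` F #= F)%card.
  apply: inj_card_eq => a b /set_mem [Ca _] /set_mem [Cb _].
  by apply: h_inj; apply/mem_set.
rewrite -(eq_finite_set hF).
apply: (@sub_finite_set _ _ `I_k.+1); last exact: finite_II.
by move=> _ [c [_ hc] <-].
Qed.

Lemma bounded_of_card_lt_bounding {X : Type} (f : X -> nat -> nat) :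
  card_lt_bounding X -> exists g, forall x, le_star (f x) g.
Proof.
move=> Xb; apply: contrapT => unbounded; apply: Xb.
exists (f @` setT); split; last exact: card_image_le.
by move=> [g Hg]; apply: unbounded; exists g => x; apply: Hg; exists x.
Qed.

Lemma countable_star_selection_finite {X : Type}
    (U : nat -> set (set X)) (C : nat -> set X) :
  card_lt_bounding X -> (forall n, countable (C n)) ->
  (forall x, exists N, forall n, (N <= n)%N -> star (C n) (U n) x) ->
  exists F : nat -> set X,
    (forall n, F n `<=` C n /\ finite_set (F n)) /\
    forall x, exists N, forall n, (N <= n)%N -> star (F n) (U n) x.
Proof.
move=> Xb C_cnt C_gamma.
have /choice [h h_inj] : forall n, exists h : X -> nat, {in C n &, injective h}.
  by move=> n; apply/countable_injP.
have /choice [f f_wit] := star_index_choice C U h.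
have [g g_bound] := bounded_of_card_lt_bounding f Xb.
exists (fun n => [set c | C n c /\ (h n c <= g n)%N]); split.
  by move=> n; split; [move=> c [] | exact: finite_sublevel].
move=> x; have [N1 HN1] := C_gamma x; have [N2 HN2] := g_bound x.
exists (maxn N1 N2) => n; rewrite geq_max => /andP [n1 n2].
apply: star_sub (f_wit x n (HN1 n n1)) => c [Cc hc].
by split => //; rewrite hc; apply: HN2.
Qed.

Theorem mainTheorem12 (X : topologicalType) :
  regular_space X ->
  selSS_cd_O_Gamma X -> countable_extent X -> card_lt_bounding X ->
  sel_strongly_star_Hurewicz X.
Proof.
move=> _ Xsel Xext Xb U D U_cov D_dense.
have [C [C_cd C_gamma]] := Xsel U D U_cov D_dense.
have C_cnt n : countable (C n) by apply: Xext; exact: (C_cd n).2.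
have [F [F_fin F_gamma]] := countable_star_selection_finite U C Xb C_cnt C_gamma.
exists F; split => // n; split; last exact: (F_fin n).2.
exact: subset_trans (F_fin n).1 (C_cd n).1.
Qed.
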